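(* Let $V$ be a vertex operator algebra of CFT type and $M=\bigoplus_{n\ge0}M(n)$ an admissible $V$-module strongly generated by $W\subseteq M$. Then $\mathrm{gr}\,A(M)$ is generated as a $\mathrm{gr}\,A(V)$-module by $\psi(\{w+C_2(M):w\in W\})$. In particular, if $M$ is strongly finitely generated, then $\mathrm{gr}\,A(M)$ is a finitely generated $\mathrm{gr}\,A(V)$-module.
   Context: $V_0=\mathbb{C}\mathbf{1}$, $V_+=\bigoplus_{n\ge1}V_n$, $Y_M(a,z)=\sum_na_nz^{-n-1}$. $M$ is strongly generated by $W$ if it is spanned by $a^1_{-n_1}\cdots a^k_{-n_k}w$ with $k\ge0$, $a^i\in V_+$ homogeneous, $n_i\ge1$, $w\in W$; strongly finitely generated means strongly generated by a finite set. $C_2(M)=\mathrm{span}\{a_{-2}v:a\in V,v\in M\}$. Zhu's algebra $A(V)=V/O(V)$ (product $a\ast b=\mathrm{Res}_zY(a,z)b\frac{(1+z)^{\mathrm{wt} a}}{z}$) is filtered by $A(V)_n=$ image of $\bigoplus_{i\le n}V_i$. $A(M)=M/O(M)$, $O(M)$ spanned by $\mathrm{Res}_zY_M(a,z)v\frac{(1+z)^{\mathrm{wt} a}}{z^2}$, is an $A(V)$-bimodule ($a\ast v=\mathrm{Res}_zY_M(a,z)v\frac{(1+z)^{\mathrm{wt} a}}{z}$, $v\ast a=\mathrm{Res}_zY_M(a,z)v\frac{(1+z)^{\mathrm{wt} a-1}}{z}$), filtered by $A(M)_n=$ image of $\bigoplus_{i=0}^nM(i)$; $\mathrm{gr}\,A(M)=\bigoplus_nA(M)_n/A(M)_{n-1}$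 is a graded $\mathrm{gr}\,A(V)$-module with $\bar a\ast\bar v=\overline{a_{-1}v}=\bar v\ast\bar a$. $\psi:M/C_2(M)\to\mathrm{gr}\,A(M)$ is the linear map $v+C_2(M)\mapsto\bar v\in A(M)_m/A(M)_{m-1}$ for $v\in M(m)$. *)

From mathcomp Require Import all_boot all_algebra.
From Stdlib Require List.
From mathcomp Require Import complex reals.
Set Implicit Arguments. Unset Strict Implicit. Unset Printing Implicit Defensive.
Import GRing.Theory Num.Theory.
Local Open Scope ring_scope.

Section VOADefs.
Variable C : fieldType.

Definition binz (r : int) (i : nat) : C :=
  (\prod_(k < i) ((r - (k : nat)%:Z)%:~R : C)) / (i`!)%:R.

(* A grading  X = (+)_{n >= 0} X_n  given by its family of projections pi n
   (X_n = image of pi n): linear, orthogonal idempotents, and every vector is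
   the finite sum of its homogeneous components. *)
Definition grading (X : lmodType C) (pi : nat -> X -> X) : Prop :=
  [/\ forall n (k : C) (x y : X), pi n (k *: x + y) = k *: pi n x + pi n y,
      forall n m (x : X), pi n (pi m x) = if n == m then pi m x else 0
    & forall x : X, exists N, x = \sum_(n < N) pi n x].

(* the modes  Y(a,z)v = sum_n a_n v z^{-n-1}  with a_n v = Y a n v : bilinear *)
Definition bilinear_modes (V X : lmodType C) (Y : V -> int -> X -> X) : Prop :=
  (forall n (k : C) a b x, Y (k *: a + b) n x = k *: Y a n x + Y b n x) /\
  (forall n (k : C) a x y, Y a n (k *: x + y) = k *: Y a n x + Y a n y).

Definition truncation (V X : lmodType C) (Y : V -> int -> X -> X) : Prop :=
  forall a x, exists N : int, forall n : int, N <= n -> Y a n x = 0.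

(* By truncation both sums are finite; we require equality of all partial sums
   beyond some bound. *)
Definition jacobi (V X : lmodType C) (Y : V -> int -> V -> V)
    (YX : V -> int -> X -> X) : Prop :=
  forall (a b : V) (x : X) (p q r : int), exists N0 : nat, forall N : nat, (N0 <= N)%N ->
    \sum_(i < N) binz p i *: YX (Y a (r + (i : nat)%:Z) b) (p + q - (i : nat)%:Z) x
    = \sum_(i < N) (((-1) ^+ i) * binz r i) *:
        (YX a (p + r - (i : nat)%:Z) (YX b (q + (i : nat)%:Z) x)
         - ((-1) ^ r) *: YX b (q + r - (i : nat)%:Z) (YX a (p + (i : nat)%:Z) x)).

Definition is_VOA_CFT (V : lmodType C) (Y : V -> int -> V -> V) (vac omega : V)
    (c : C) (pi : nat -> V -> V) : Prop :=
  let L (n : int) := Y omega (n + 1) in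
  [/\ [/\ grading pi, bilinear_modes Y, truncation Y & jacobi Y Y],
      (forall n, exists s : seq V, forall v, exists k : 'I_(size s) -> C,
          pi n v = \sum_(i < size s) k i *: s`_i),
      [/\ forall n v, Y vac n v = (if n == -1 then v else 0),
          forall a, Y a (-1) vac = a
        & forall a (n : int), 0 <= n -> Y a n vac = 0],
      (* CFT type: V_0 = C 1 (and V_n = 0 for n < 0 is built into the N-grading) *)
      (vac != 0 /\ (forall v, exists k : C, pi 0 v = k *: vac))
    &
      [/\ pi 2 omega = omega,
          forall (m n : int) v, L m (L n v) - L n (L m v) =
            (m - n)%:~R *: L (m + n) v
            + (if m + n == 0 then ((m ^+ 3 - m)%:~R / 12%:R) * c else 0) *: v,
          forall n v, L 0 (pi n v) = n%:R *: pi n v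
        & forall a (n : int) v, Y (L (-1) a) n v = - n%:~R *: Y a (n - 1) v]].

Definition is_admissible (V : lmodType C) (Y : V -> int -> V -> V) (vac : V)
    (pi : nat -> V -> V) (M : lmodType C) (YM : V -> int -> M -> M)
    (piM : nat -> M -> M) : Prop :=
  [/\ bilinear_modes YM /\ truncation YM,
      forall n w, YM vac n w = (if n == -1 then w else 0),
      jacobi Y YM,
      grading piM
    & forall (k n j : nat) (a : V) (m : int) (w : M),
        pi k a = a -> piM n w = w ->
        piM j (YM a m w) = (if j%:Z == k%:Z - m - 1 + n%:Z then YM a m w else 0)].

Definition in_Vplus_hom (V : lmodType C) (pi : nat -> V -> V) (a : V) : Prop :=
  exists k : nat, (0 < k)%N /\ pi k a = a.

(* a^1_{-n_1} ... a^k_{-n_k} w, the list s storing pairs (a^i, n_i - 1) *)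
Definition monomial (V M : lmodType C) (YM : V -> int -> M -> M)
    (s : seq (V * nat)) (w : M) : M :=
  foldr (fun an x => YM an.1 (- (an.2.+1 : nat)%:Z) x) w s.

Definition strongly_generated (V M : lmodType C) (pi : nat -> V -> V)
    (YM : V -> int -> M -> M) (W : M -> Prop) : Prop :=
  forall x : M, exists (K : nat) (k : 'I_K -> C) (s : 'I_K -> seq (V * nat))
      (w : 'I_K -> M),
    (forall i, W (w i) /\ (forall an, List.In an (s i) -> in_Vplus_hom pi an.1)) /\
    x = \sum_(i < K) k i *: monomial YM (s i) (w i).

Definition strongly_fin_generated (V M : lmodType C) (pi : nat -> V -> V)
    (YM : V -> int -> M -> M) : Prop :=
  exists S : seq M, strongly_generated pi YM (fun w => List.In w S).

(* Res_z Y_M(a,z)v (1+z)^{wt a}/z^2 = sum_{j=0}^{wt a} binom(wt a, j) a_{j-2} v *)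
Definition circM (V M : lmodType C) (YM : V -> int -> M -> M) (a : V) (wt : nat)
    (v : M) : M :=
  \sum_(j < wt.+1) ('C(wt, j))%:R *: YM a ((j : nat)%:Z - 2) v.

Definition inOM (V M : lmodType C) (pi : nat -> V -> V) (YM : V -> int -> M -> M)
    (x : M) : Prop :=
  exists (K : nat) (k : 'I_K -> C) (a : 'I_K -> V) (wt : 'I_K -> nat) (v : 'I_K -> M),
    (forall i, pi (wt i) (a i) = a i) /\
    x = \sum_(i < K) k i *: circM YM (a i) (wt i) (v i).

(* preimage in M of A(M)_{n-1} (for n = 0 this is O(M), i.e. A(M)_{-1} = 0):
   x = o + y with o in O(M) and y in (+)_{i < n} M(i) *)
Definition filtM_pred (V M : lmodType C) (pi : nat -> V -> V)
    (YM : V -> int -> M -> M) (piM : nat -> M -> M) (n : nat) (x : M) : Prop :=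
  exists o : M, inOM pi YM o /\ forall j : nat, (n <= j)%N -> piM j (x - o) = 0.

(* Elements of gr A(M) = (+)_n A(M)_n/A(M)_{n-1} are represented by families
   X : nat -> M with X n in M(n) (representing the class of X n in
   A(M)_n/A(M)_{n-1}), finitely many nonzero. *)
Definition gr_elem (M : lmodType C) (piM : nat -> M -> M) (X : nat -> M) : Prop :=
  (forall n, piM n (X n) = X n) /\ exists N, forall n, (N <= n)%N -> X n = 0.

Definition gr_eq (V M : lmodType C) (pi : nat -> V -> V) (YM : V -> int -> M -> M)
    (piM : nat -> M -> M) (X Z : nat -> M) : Prop :=
  forall n, filtM_pred pi YM piM n (X n - Z n).

(* psi(w + C_2(M)) : the image of w, i.e. the sum over m of the class of its
   component w_m in A(M)_m/A(M)_{m-1} *)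
Definition psi (M : lmodType C) (piM : nat -> M -> M) (w : M) : nat -> M :=
  fun n => piM n w.

(* action of abar in gr A(V)_i (a in V_i) on gr A(M): abar * vbar = class of a_{-1} v *)
Definition gr_act (V M : lmodType C) (YM : V -> int -> M -> M) (a : V) (i : nat)
    (X : nat -> M) : nat -> M :=
  fun n => if (i <= n)%N then YM a (-1) (X (n - i)%N) else 0.

(* Every element of gr A(V) is a finite sum of abar with a in V_i homogeneous
   (A(V)_i/A(V)_{i-1} is the image of V_i), so the submodule generated by G is
   the set of finite sums  sum_k c_k abar_k * g_k  with g_k in G. *)
Definition gr_generated_by (V M : lmodType C) (pi : nat -> V -> V)
    (YM : V -> int -> M -> M) (piM : nat -> M -> M) (G : (nat -> M) -> Prop) : Prop :=
  forall X : nat -> M, gr_elem piM X ->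
    exists (K : nat) (k : 'I_K -> C) (a : 'I_K -> V) (i : 'I_K -> nat)
      (g : 'I_K -> (nat -> M)),
      (forall t, pi (i t) (a t) = a t /\ G (g t)) /\
      gr_eq pi YM piM X (fun n => \sum_(t < K) k t *: gr_act YM (a t) (i t) (g t) n).

Definition psi_image (M : lmodType C) (piM : nat -> M -> M) (W : M -> Prop) :
    (nat -> M) -> Prop :=
  fun X => exists w, W w /\ X = psi piM w.

Definition gr_fin_generated (V M : lmodType C) (pi : nat -> V -> V)
    (YM : V -> int -> M -> M) (piM : nat -> M -> M) : Prop :=
  exists S : seq (nat -> M), (forall X, List.In X S -> gr_elem piM X) /\
    gr_generated_by pi YM piM (fun X => List.In X S).

End VOADefs.

From mathcomp Require Import all_boot all_algebra.
From mathcomp Require Import complex reals.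
From mathcomp Require Import zify.
Set Implicit Arguments. Unset Strict Implicit. Unset Printing Implicit Defensive.
Import GRing.Theory Num.Theory.
Local Open Scope ring_scope.

(* Modulo C_2(M), a monomial a^1_{-n_1} ... a^k_{-n_k} w equals b_{-1} w with
   b = a^1_{-n_1} ... a^k_{-n_k} 1: for r <= -1 the associativity formula gives
   (a_r b)_{-1} w = a_r b_{-1} w modulo modes of index <= -2, and the commutator
   formula makes C_2(M) stable under all a_m with m <= -1.  The degree-n
   component of b_{-1} w is sum_e (b_e)_{-1} w_{n-e}, which is the action of
   gr A(V) on psi(w).  Finally, C_2(M) vanishes in gr A(M): a_{-2} v differs
   from the generator a o v of O(M) by terms of lower degree, and the relation
   (L(-1) a)_{-k} = k a_{-k-1} propagates this to every a_{-k} with k >= 2. *)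

Section LinearFun.
Variables (R : pzRingType) (X X' : lmodType R) (f : X -> X').
Hypothesis f_linear : linear f.

Lemma lin0 : f 0 = 0.
Proof.
have := f_linear 1 0 0; rewrite scaler0 add0r scale1r => f0.
by apply: (addrI (f 0)); rewrite addr0 -f0.
Qed.

Lemma linD x y : f (x + y) = f x + f y.
Proof. by have := f_linear 1 x y; rewrite !scale1r. Qed.

Lemma linZ k x : f (k *: x) = k *: f x.
Proof. by have := f_linear k x 0; rewrite !addr0 lin0 addr0. Qed.

Lemma linN x : f (- x) = - f x.
Proof. by rewrite -scaleN1r linZ scaleN1r. Qed.

Lemma linB x y : f (x - y) = f x - f y.
Proof. by rewrite linD linN. Qed.

Lemma lin_sum I (r : seq I) (P : pred I) (F : I -> X) :
  f (\sum_(i <- r | P i) F i) = \sum_(i <- r | P i) f (F i).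
Proof. exact: (big_morph f linD lin0). Qed.

End LinearFun.

Lemma sum_enum_val (X : nmodType) (T : finType) (F : T -> X) :
  \sum_t F t = \sum_(j < #|T|) F (enum_val j).
Proof. by rewrite -big_enum_val; apply: eq_bigl => t; rewrite inE. Qed.

Section Span.
Variables (R : pzRingType) (X : lmodType R) (P : X -> Prop).

Definition span (x : X) := exists K (k : 'I_K -> R) (g : 'I_K -> X),
  (forall i, P (g i)) /\ x = \sum_(i < K) k i *: g i.

Lemma span_fin (T : finType) (k : T -> R) (g : T -> X) :
  (forall t, P (g t)) -> span (\sum_t k t *: g t).
Proof.
move=> Pg; exists #|T|, (k \o enum_val), (g \o enum_val).
by split=> [i|]; [exact: Pg | rewrite sum_enum_val].
Qed.

Lemma span0 : span 0.
Proof.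
by exists 0%N, (fun=> 0), (fun=> 0); split; [case | rewrite big_ord0].
Qed.

Lemma span1 x : P x -> span x.
Proof.
by move=> Px; exists 1%N, (fun=> 1), (fun=> x); rewrite big_ord1 scale1r.
Qed.

Lemma spanD x y : span x -> span y -> span (x + y).
Proof.
move=> [K1 [k1 [g1 [Pg1 ->]]]] [K2 [k2 [g2 [Pg2 ->]]]].
have := @span_fin ('I_K1 + 'I_K2)%type
  (fun t => match t with inl i => k1 i | inr i => k2 i end)
  (fun t => match t with inl i => g1 i | inr i => g2 i end).
by rewrite big_sumType; apply; case.
Qed.

Lemma spanZ k x : span x -> span (k *: x).
Proof.
move=> [K [k1 [g [Pg ->]]]]; exists K, (fun i => k * k1 i), g; split => //.
by rewrite scaler_sumr; apply: eq_bigr => i _; rewrite scalerA.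
Qed.

Lemma spanB x y : span x -> span y -> span (x - y).
Proof. by move=> Sx Sy; apply: spanD; rewrite // -scaleN1r; apply: spanZ. Qed.

Lemma span_sum I (r : seq I) (Q : pred I) (F : I -> X) :
  (forall i, span (F i)) -> span (\sum_(i <- r | Q i) F i).
Proof. by move=> SF; apply: big_ind => //; [exact: span0 | exact: spanD]. Qed.

End Span.

Section Grading.
Variables (C : fieldType) (X : lmodType C) (p : nat -> X -> X).
Hypothesis p_grading : grading p.

Lemma grading_linear n : linear (p n).
Proof. by case: p_grading => p_linear _ _; apply: p_linear. Qed.

Lemma grading_orth n m x : p n (p m x) = if n == m then p m x else 0.
Proof. by case: p_grading. Qed.

Lemma grading_idem n x : p n (p n x) = p n x.
Proof. by rewrite grading_orth eqxx. Qed.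

Lemma grading_decomp x : exists N, x = \sum_(n < N) p n x.
Proof. by case: p_grading. Qed.

Lemma grading_sum_hom N (F : nat -> X) n : (forall j, p j (F j) = F j) ->
  p n (\sum_(j < N) F j) = if (n < N)%N then F n else 0.
Proof.
move=> F_hom; rewrite (lin_sum (grading_linear n)).
rewrite -(@big_ord1_eq _ 0 +%R F) [RHS]big_mkcond.
by apply: eq_bigr => j _; rewrite -F_hom grading_orth eq_sym.
Qed.

Lemma grading_homP n x : (forall m, m != n -> p m x = 0) -> p n x = x.
Proof.
move=> p_off; have [N ->] := grading_decomp x.
rewrite (@grading_sum_hom N (p ^~ x)) => [|j]; last exact: grading_idem.
rewrite -(@big_ord1_eq _ 0 +%R (p ^~ x)) [LHS]big_mkcond.
apply: eq_bigr => m _ /=.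
by case: eqP => [// | /eqP /p_off ->].
Qed.

End Grading.

Section Filtration.
Variables (C : fieldType) (V M : lmodType C) (pi : nat -> V -> V).
Variables (YM : V -> int -> M -> M) (piM : nat -> M -> M).
Hypothesis piM_grading : grading piM.

Local Notation OM := (inOM pi YM).
Local Notation filt n := (filtM_pred pi YM piM n).

Lemma inOM_fin (T : finType) (k : T -> C) (a : T -> V) (wt : T -> nat)
    (v : T -> M) :
  (forall t, pi (wt t) (a t) = a t) ->
  OM (\sum_t k t *: circM YM (a t) (wt t) (v t)).
Proof.
move=> a_hom; exists #|T|, (k \o enum_val), (a \o enum_val), (wt \o enum_val).
by exists (v \o enum_val); split=> [i|]; [exact: a_hom | rewrite sum_enum_val].
Qed.

Lemma inOM0 : OM 0.
Proof.
exists 0%N, (fun=> 0), (fun=> 0), (fun=> 0%N), (fun=> 0).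
by split; [case | rewrite big_ord0].
Qed.

Lemma inOM_circM a e v : pi e a = a -> OM (circM YM a e v).
Proof.
move=> a_hom; exists 1%N, (fun=> 1), (fun=> a), (fun=> e), (fun=> v).
by rewrite big_ord1 scale1r.
Qed.

Lemma inOMD x y : OM x -> OM y -> OM (x + y).
Proof.
move=> [K1 [k1 [a1 [e1 [v1 [a1_hom ->]]]]]].
move=> [K2 [k2 [a2 [e2 [v2 [a2_hom ->]]]]]].
pose pick T (f1 : 'I_K1 -> T) f2 (t : 'I_K1 + 'I_K2) :=
  match t with inl i => f1 i | inr i => f2 i end.
have := @inOM_fin _ (pick _ k1 k2) (pick _ a1 a2) (pick _ e1 e2) (pick _ v1 v2).
by rewrite big_sumType; apply; case.
Qed.

Lemma inOMZ k x : OM x -> OM (k *: x).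
Proof.
move=> [K [k1 [a [e [v [a_hom ->]]]]]]; exists K, (fun i => k * k1 i), a, e, v.
by split => //; rewrite scaler_sumr; apply: eq_bigr => i _; rewrite scalerA.
Qed.

Let piM_linear := grading_linear piM_grading.

Lemma filtM_low n x : (forall j, (n <= j)%N -> piM j x = 0) -> filt n x.
Proof.
move=> x_low; exists 0; split=> [|j]; first exact: inOM0.
by rewrite subr0; apply: x_low.
Qed.

Lemma filtM0 n : filt n 0.
Proof. by apply: filtM_low => j _; rewrite (lin0 (piM_linear j)). Qed.

Lemma filtMD n x y : filt n x -> filt n y -> filt n (x + y).
Proof.
move=> [o1 [O1 x_o1]] [o2 [O2 y_o2]].
exists (o1 + o2); split; first exact: inOMD.
move=> j le_nj; rewrite opprD addrACA (linD (piM_linear j)).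
by rewrite x_o1 // y_o2 // addr0.
Qed.

Lemma filtMZ n k x : filt n x -> filt n (k *: x).
Proof.
move=> [o [Oo x_o]]; exists (k *: o); split; first exact: inOMZ.
by move=> j le_nj; rewrite -scalerBr (linZ (piM_linear j)) x_o // scaler0.
Qed.

Lemma filtM_sum n I (r : seq I) (P : pred I) (F : I -> M) :
  (forall i, filt n (F i)) -> filt n (\sum_(i <- r | P i) F i).
Proof. by move=> Ff; apply: big_ind => //; [exact: filtM0 | apply: filtMD]. Qed.

End Filtration.

Section Binz.
Variable C : fieldType.

Lemma binz0 (r : int) : binz C r 0 = 1.
Proof. by rewrite /binz big_ord0 fact0 divr1. Qed.

Lemma binz0S i : binz C 0 i.+1 = 0.
Proof. by rewrite /binz big_ord_recl /= subr0 !mul0r. Qed.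

Lemma binz1 (r : int) : binz C r 1 = r%:~R.
Proof. by rewrite /binz big_ord1 /= subr0 divr1. Qed.

End Binz.

Lemma pchar0_natr_eq (R : idomainType) : has_pchar0 R ->
  forall m n, (m%:R == n%:R :> R) = (m == n).
Proof.
move=> R0 m n; wlog le_mn : m n / (m <= n)%N.
  by move=> eq_mn; case: (leqP m n) => [|/ltnW] /eq_mn //; rewrite eq_sym => ->.
rewrite -(subnKC le_mn) natrD -[X in X == _]addr0 (inj_eq (addrI _)).
have := eqn_add2l m 0 (n - m); rewrite addn0 => ->.
by rewrite !(eq_sym 0) (pcharf0P R).1.
Qed.

Section AdmissibleModule.
Variables (C : fieldType) (V M : lmodType C).
Variables (Y : V -> int -> V -> V) (vac omega : V) (c : C) (pi : nat -> V -> V).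
Variables (YM : V -> int -> M -> M) (piM : nat -> M -> M).

Local Notation L n := (Y omega (n + 1)).
Local Notation filt n := (filtM_pred pi YM piM n).

Hypothesis pi_grading : grading pi.
Hypothesis piM_grading : grading piM.
Hypothesis Y_modes : bilinear_modes Y.
Hypothesis YM_modes : bilinear_modes YM.
Hypothesis YM_jacobi : jacobi Y YM.
Hypothesis vacM : forall n w, YM vac n w = (if n == -1 then w else 0).
Hypothesis vac_creation : forall a, Y a (-1) vac = a.
Hypothesis vac_annihilation : forall a (n : int), 0 <= n -> Y a n vac = 0.
Hypothesis virasoro : forall (m n : int) v, L m (L n v) - L n (L m v) =
  (m - n)%:~R *: L (m + n) v
  + (if m + n == 0 then ((m ^+ 3 - m)%:~R / 12%:R) * c else 0) *: v.
Hypothesis L0_weight : forall n v, L 0 (pi n v) = n%:R *: pi n v.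
Hypothesis L_minus1_derivative :
  forall a (n : int) v, Y (L (-1) a) n v = - n%:~R *: Y a (n - 1) v.
Hypothesis YM_weight : forall (k n j : nat) (a : V) (m : int) (w : M),
  pi k a = a -> piM n w = w ->
  piM j (YM a m w) = (if j%:Z == k%:Z - m - 1 + n%:Z then YM a m w else 0).
Hypothesis C_char0 : has_pchar0 C.

Let pi_linear := grading_linear pi_grading.
Let piM_linear := grading_linear piM_grading.
Let Y_linear a n : linear (Y a n) := fun k => proj2 Y_modes n k a.
Let YM_linear a n : linear (YM a n) := fun k => proj2 YM_modes n k a.
Let YM_linear_l n (w : M) : linear (fun a => YM a n w) :=
  fun k a b => proj1 YM_modes n k a b w.

Lemma commutator_modes a b y m k : exists N,
  YM a m (YM b k y) - YM b k (YM a m y) =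
  \sum_(i < N) binz C m i *: YM (Y a (i : nat)%:Z b) (m + k - (i : nat)%:Z) y.
Proof.
have [N jac] := YM_jacobi a b y m k 0; exists N.+1.
under eq_bigr do rewrite -[(_ : nat)%:Z]add0r.
rewrite jac // big_ord_recl big1 => [|i _]; last first.
  by rewrite binz0S mulr0 scale0r.
rewrite /= expr0 binz0 mulr1 expr0z !scale1r addr0.
by congr (YM a _ (YM b _ y) - YM b _ (YM a _ y)); lia.
Qed.

Lemma derivative_modes a (n : int) x :
  YM (Y a (-2) vac) n x = - n%:~R *: YM a (n - 1) x.
Proof.
have [N jac] := YM_jacobi a vac x (n + 1) (-1) (-2).
move: (jac N.+2 (leqW (leqnSn _))).
rewrite big_ord_recl big_ord_recl big1 => [|i _]; last first.
  by rewrite vac_annihilation ?(lin0 (YM_linear_l _ _)) ?scaler0 //=; lia.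
rewrite big_ord_recl big1 => [|i _]; last first.
  rewrite !vacM.
  have -> : (-1 + (lift ord0 i : nat)%:Z == -1) = false by rewrite lift0; lia.
  have -> : (-1 - 2 - (lift ord0 i : nat)%:Z == -1) = false.
    by rewrite lift0; lia.
  by rewrite scaler0 subr0 (lin0 (YM_linear _ _)) scaler0.
rewrite /= !addr0 binz0 binz1 vac_creation !vacM /= expr0 mul1r binz0 scaler0.
rewrite subr0 !scale1r.
have -> : n + 1 - 1 - 1%N%:Z = n - 1 by lia.
have -> : n + 1 - 1 = n by lia.
have -> : n + 1 - 2 = n - 1 by lia.
move/(canRL (addrK _)) ->.
rewrite -{1}(scale1r (YM a (n - 1) x)) -scalerBl.
by rewrite intrD opprD addrCA subrr addr0.
Qed.

Lemma pi_L0 m v : pi m (L 0 v) = m%:R *: pi m v.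
Proof.
have [N ->] := grading_decomp pi_grading v.
rewrite (lin_sum (Y_linear _ _)) !(lin_sum (pi_linear _)) scaler_sumr.
apply: eq_bigr => j _; rewrite L0_weight (linZ (pi_linear _)) grading_orth //.
by case: eqP => [-> // | _]; rewrite !scaler0.
Qed.

Lemma L_minus1_vac a : L (-1) a = Y a (-2) vac.
Proof. by rewrite -[LHS]vac_creation L_minus1_derivative opprK scale1r. Qed.

Lemma pi_L_minus1 e a : pi e a = a -> pi e.+1 (L (-1) a) = L (-1) a.
Proof.
move=> a_hom; apply: (grading_homP pi_grading) => m m_ne.
have L0a : L 0 a = e%:R *: a by rewrite -{1}a_hom L0_weight a_hom.
have L0La : L 0 (L (-1) a) = e.+1%:R *: L (-1) a.
  move: (virasoro 0 (-1) a).
  rewrite L0a (linZ (Y_linear _ _)) scale1r scale0r addr0.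
  by move/(canRL (subrK _)) ->; rewrite -natr1 scalerDl scale1r addrC.
move: (pi_L0 m (L (-1) a)); rewrite L0La (linZ (pi_linear _)) => /eqP.
rewrite -subr_eq0 -scalerBl scaler_eq0 subr_eq0 (pchar0_natr_eq C_char0).
by rewrite eq_sym (negbTE m_ne) => /eqP.
Qed.

Lemma filtM_mode_minus2 e a q y : pi e a = a -> piM q y = y ->
  filt (e + 1 + q) (YM a (-2) y).
Proof.
move=> a_hom y_hom; exists (circM YM a e y); split; first exact: inOM_circM.
move=> j le_j; rewrite /circM big_ord_recl /= bin0 scale1r.
have -> : (0%N)%:Z - 2 = (-2)%R by [].
rewrite [- (YM _ _ _ + _)]opprD addrA subrr sub0r.
rewrite (linN (piM_linear _)) (lin_sum (piM_linear _)) big1 ?oppr0 // => i _.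
rewrite (linZ (piM_linear _)) (YM_weight _ _ a_hom y_hom) ifF ?scaler0 //.
by apply/negbTE; move: le_j; rewrite /bump /=; lia.
Qed.

Lemma filtM_mode_le_minus2 k e a q y :
  (2 <= k)%N -> pi e a = a -> piM q y = y ->
  filt (e + k.-1 + q) (YM a (- k%:Z) y).
Proof.
elim: k e a => [// | k IH] e a le2k a_hom y_hom.
have [lt_k2 | le2k'] := ltnP k 2.
  have -> : k = 1%N by lia.
  exact: filtM_mode_minus2.
have La_hom := pi_L_minus1 a_hom; rewrite L_minus1_vac in La_hom.
have := IH _ _ le2k' La_hom y_hom; rewrite derivative_modes.
have -> : - k%:Z - 1 = - k.+1%:Z by lia.
have -> : (e.+1 + k.-1 = e + k.+1.-1)%N by lia.
rewrite intrN opprK -pmulrn => /(filtMZ piM_grading k%:R^-1).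
by rewrite scalerK // (pcharf0P C).1 //; lia.
Qed.

(* Equal to C_2(M), since a_{-k-1} v is a multiple of (L(-1) a)_{-k} v. *)
Definition C2M :=
  span (fun x : M => exists a (k : int) y, k <= -2 /\ x = YM a k y).

Lemma C2M_mode a k y : k <= -2 -> C2M (YM a k y).
Proof. by move=> le_k; apply: span1; exists a, k, y. Qed.

Lemma C2M_mode_closed a m t : m <= -1 -> C2M t -> C2M (YM a m t).
Proof.
move=> le_m [K [k [g [g_gen ->]]]].
rewrite (lin_sum (YM_linear _ _)); apply: span_sum => i.
rewrite (linZ (YM_linear _ _)); apply: spanZ.
have [b [l [y [le_l ->]]]] := g_gen i.
have [N comm] := commutator_modes a b y m l.
rewrite -[YM a m _](subrK (YM b l (YM a m y))) comm addrC.
apply: spanD; first exact: C2M_mode.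
by apply: span_sum => j; apply: spanZ; apply: C2M_mode; lia.
Qed.

Lemma C2M_assoc a b u r : r <= -1 ->
  C2M (YM (Y a r b) (-1) u - YM a r (YM b (-1) u)).
Proof.
move=> le_r; have [N jac] := YM_jacobi a b u 0 (-1) r.
move: (jac N.+1 (leqnSn N)); rewrite big_ord_recl big1 => [|i _]; last first.
  by rewrite binz0S scale0r.
rewrite binz0 scale1r addr0 /= addr0 subr0 sub0r => ->.
rewrite big_ord_recl /= expr0 mul1r binz0 scale1r !add0r !subr0.
rewrite addrAC [_ - _ - _]addrAC subrr add0r -scaleNr.
apply: spanD; first by apply: spanZ; apply: C2M_mode; lia.
apply: span_sum => i; rewrite -[bump 0 i]/(i.+1); apply: spanZ.
by apply: spanB; last apply: spanZ; apply: C2M_mode; lia.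
Qed.

Lemma monomial_C2M s u : C2M (monomial YM s u - YM (monomial Y s vac) (-1) u).
Proof.
elim: s => [|[a n] s IH]; first by rewrite /= vacM eqxx subrr; apply: span0.
rewrite /monomial /= -/(monomial YM s u) -/(monomial Y s vac).
set r := - (n.+1)%:Z; set b := monomial Y s vac.
have -> : YM a r (monomial YM s u) - YM (Y a r b) (-1) u =
    YM a r (monomial YM s u - YM b (-1) u)
    - (YM (Y a r b) (-1) u - YM a r (YM b (-1) u)).
  by rewrite (linB (YM_linear _ _)) opprB addrA subrK.
by apply: spanB; [apply: C2M_mode_closed | apply: C2M_assoc].
Qed.

Lemma C2M_filt t n : C2M t -> filt n (piM n t).
Proof.
move=> [K [k [g [g_gen ->]]]].
rewrite (lin_sum (piM_linear _)); apply: (filtM_sum piM_grading) => i.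
rewrite (linZ (piM_linear _)); apply: (filtMZ piM_grading).
have [a [l [y [le_l ->]]]] := g_gen i.
have [E ->] := grading_decomp pi_grading a.
have [Q ->] := grading_decomp piM_grading y.
rewrite (lin_sum (YM_linear_l _ _)) (lin_sum (piM_linear _)).
apply: (filtM_sum piM_grading) => e.
rewrite (lin_sum (YM_linear _ _)) (lin_sum (piM_linear _)).
apply: (filtM_sum piM_grading) => q.
have a_hom := grading_idem pi_grading e a.
have y_hom := grading_idem piM_grading q y.
rewrite (YM_weight _ _ a_hom y_hom); case: eqP => [n_eq | _]; last first.
  exact: filtM0.
have [m l_m] : exists m : nat, l = - m%:Z by exists `|l|%N; lia.
rewrite l_m in le_l n_eq *; have -> : n = (e + m.-1 + q)%N by lia.
by apply: filtM_mode_le_minus2 => //; lia.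
Qed.

Lemma piM_mode_minus1 e a w n : pi e a = a ->
  piM n (YM a (-1) w) = gr_act YM a e (psi piM w) n.
Proof.
move=> a_hom; rewrite /gr_act /psi; have [Q ->] := grading_decomp piM_grading w.
rewrite (lin_sum (YM_linear _ _)) (lin_sum (piM_linear _)).
have YM_q q := YM_weight n (-1) a_hom (grading_idem piM_grading q w).
case: leqP => [le_en | lt_ne]; last first.
  by apply: big1 => q _; rewrite YM_q ifF //; lia.
rewrite (lin_sum (piM_linear _)) (lin_sum (YM_linear _ _)).
apply: eq_bigr => q _.
rewrite YM_q grading_orth //; case: eqP => [n_eq | n_ne].
  by rewrite ifT //; lia.
by rewrite ifF ?(lin0 (YM_linear _ _)) //; lia.
Qed.

Lemma piM_mode_minus1_sum E z w n : z = \sum_(e < E) pi e z ->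
  piM n (YM z (-1) w) = \sum_(e < E) gr_act YM (pi e z) e (psi piM w) n.
Proof.
move=> z_dec; rewrite {1}z_dec (lin_sum (YM_linear_l _ _)).
rewrite (lin_sum (piM_linear _)); apply: eq_bigr => e _.
by rewrite (piM_mode_minus1 _ _ (grading_idem pi_grading e z)).
Qed.

Lemma gr_generated_by_fin (G : (nat -> M) -> Prop) :
  (forall X, gr_elem piM X -> exists (T : finType) (k : T -> C) (a : T -> V)
      (i : T -> nat) (g : T -> nat -> M),
    (forall t, pi (i t) (a t) = a t /\ G (g t)) /\
    gr_eq pi YM piM X (fun n => \sum_t k t *: gr_act YM (a t) (i t) (g t) n)) ->
  gr_generated_by pi YM piM G.
Proof.
move=> G_gen X X_gr; have [T [k [a [i [g [a_hom X_eq]]]]]] := G_gen X X_gr.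
exists #|T|, (k \o enum_val), (a \o enum_val), (i \o enum_val), (g \o enum_val).
by split=> [j | n]; [exact: a_hom | move: (X_eq n); rewrite sum_enum_val].
Qed.

Lemma gr_generated_by_psi_image W :
  strongly_generated pi YM W -> gr_generated_by pi YM piM (psi_image piM W).
Proof.
move=> W_gen; apply: gr_generated_by_fin => X [X_hom [N X_fin]].
have [K [k [s [w [sw_gen x_eq]]]]] := W_gen (\sum_(n < N) X n).
pose z i := monomial Y (s i) vac.
have [E z_dec] := fin_all_exists (fun i => grading_decomp pi_grading (z i)).
pose T : finType := {i : 'I_K & 'I_(E i)}.
exists T, (fun p : T => k (tag p)), (fun p : T => pi (tagged p) (z (tag p))).
exists (fun p : T => tagged p : nat), (fun p : T => psi piM (w (tag p))).
split=> [p | n].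
  split; first exact: grading_idem.
  by exists (w (tag p)); split => //; case: (sw_gen (tag p)).
have : C2M (\sum_(n < N) X n - \sum_i k i *: YM (z i) (-1) (w i)).
  rewrite x_eq -sumrB; apply: span_sum => i; rewrite -scalerBr.
  exact/spanZ/monomial_C2M.
move/(C2M_filt n); rewrite (linB (piM_linear _)) grading_sum_hom //.
rewrite (lin_sum (piM_linear _)).
suff -> : \sum_i piM n (k i *: YM (z i) (-1) (w i)) = \sum_(p : T) k (tag p)
    *: gr_act YM (pi (tagged p) (z (tag p))) (tagged p) (psi piM (w (tag p))) n.
  by case: ltnP => // /X_fin ->.
rewrite -(sig_big_dep xpredT (fun _ => xpredT)
  (fun i (e : 'I_(E i)) => k i *: gr_act YM (pi e (z i)) e (psi piM (w i)) n)).
apply: eq_bigr => i _; rewrite (linZ (piM_linear _)) -scaler_sumr.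
by rewrite (piM_mode_minus1_sum _ _ (z_dec i)).
Qed.

Lemma psi_gr_elem w : gr_elem piM (psi piM w).
Proof.
split=> [n | ]; first exact: grading_idem.
have [N w_dec] := grading_decomp piM_grading w; exists N => n le_Nn.
rewrite /psi w_dec (@grading_sum_hom _ _ _ piM_grading N (piM ^~ w)).
  by rewrite ltnNge le_Nn.
by move=> m; apply: grading_idem.
Qed.

Lemma gr_generated_by_sub (G G' : (nat -> M) -> Prop) :
  (forall g, G g -> G' g) ->
  gr_generated_by pi YM piM G -> gr_generated_by pi YM piM G'.
Proof.
move=> sGG' G_gen X X_gr; have [K [k [a [i [g [gen X_eq]]]]]] := G_gen X X_gr.
exists K, k, a, i, g; split => // t; have [a_hom Gg] := gen t.
by split; last exact: sGG'.
Qed.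

Lemma gr_fin_generated_of_strongly :
  strongly_fin_generated pi YM -> gr_fin_generated pi YM piM.
Proof.
move=> [S S_gen]; exists (List.map (psi piM) S); split.
  by move=> X /List.in_map_iff [w [<- _]]; apply: psi_gr_elem.
apply: gr_generated_by_sub (gr_generated_by_psi_image S_gen) => _ [w [Sw ->]].
exact: List.in_map.
Qed.

End AdmissibleModule.

Theorem proposition4p7 (R : realType) (V : lmodType R[i])
    (Y : V -> int -> V -> V) (vac omega : V) (c : R[i]) (pi : nat -> V -> V)
    (M : lmodType R[i]) (YM : V -> int -> M -> M) (piM : nat -> M -> M) :
  is_VOA_CFT Y vac omega c pi ->
  is_admissible Y vac pi YM piM ->
  (forall W : M -> Prop, strongly_generated pi YM W ->
     gr_generated_by pi YM piM (psi_image piM W)) /\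
  (strongly_fin_generated pi YM -> gr_fin_generated pi YM piM).
Proof.
move=> [[pi_grading Y_modes _ _] _ [_ vac_creation vac_annihilation] _
        [_ virasoro L0_weight L_minus1_derivative]].
move=> [[YM_modes _] vacM YM_jacobi piM_grading YM_weight].
have C_char0 := @pchar_num R[i].
split=> [W |].
  by apply: gr_generated_by_psi_image; eassumption.
by apply: gr_fin_generated_of_strongly; eassumption.
Qed.
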